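(* Let $\widehat{\mathcal T}^{bin}_{pl}$ be the completion (formal infinite sums, graded by number of internal vertices) of the linear span over a field $k$ of characteristic zero of planar binary trees, with the associative product $*$ described in the context, and let $\tau_l^{(n)}$ be the left comb with $n$ internal vertices. Put $X:=|+\sum_{n\ge1}\tau_l^{(n)}$. Then $$\log^*(X)=\sum_{n>0}\frac1n\sum_{t\ \text{planar binary},\ |t|=n}\frac{(-1)^{d(t)}}{\binom{n-1}{d(t)}}\,t,$$ where $|t|$ is the number of internal vertices of $t$ and $d(t)$ its number of descents.
   Context: A planar binary tree is a finite planar rooted tree in which every internal vertex has exactly two incoming edges (a left one and a right one) and one outgoing edge; leaves are the external incoming edges, and there is one root edge. The tree with no internal vertex is the single edge $|$. For planar binary trees $t_1,t_2$, $t_1\vee t_2$ is the tree obtained by grafting $t_1$ and $t_2$ as left and right subtrees on a new root vertex; every tree $t\ne|$ decomposes uniquely as $t=t_1\vee t_2$. Extend $\vee$ bilinearly. The product $*$ is the bilinear product defined recursively by $|*t=t*|=t$ and, for $s=s_1\vee s_2$, $t=t_1\vee t_2$, $s*t=s_1\vee(s_2*t)+(s*t_1)\vee t_2$; it is associative with unit $|$ and additive in the number of internal vertices, so it extends to the completion. Left combs: $\tau_l^{(0)}=|$, $\tau_l^{(n+1)}=\tau_l^{(n)}\vee|$. For $L$ with no degree-$0$ component, $\log^*(|+L):=\sum_{k\ge1}\frac{(-1)^{k+1}}{k}L^{*k}$. A leaf of a planar binary tree is a descent if it is not the leftmost leaf and it points to the left, i.e. it is the left incoming edge of its internal vertex.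 *)

From HB Require Import structures.
From mathcomp Require Import all_boot all_order all_algebra.
Set Implicit Arguments. Unset Strict Implicit. Unset Printing Implicit Defensive.
Import Order.TTheory GRing.Theory Num.Theory.

(* Planar binary trees: [Leaf] is the single edge |, [Node t1 t2] = t1 \/ t2. *)
Inductive tree : Type := Leaf | Node of tree & tree.

Fixpoint tree_eqb (s t : tree) : bool :=
  match s, t with
  | Leaf, Leaf => true
  | Node s1 s2, Node t1 t2 => tree_eqb s1 t1 && tree_eqb s2 t2
  | _, _ => false
  end.

Lemma tree_eqP : Equality.axiom tree_eqb.
Proof.
elim=> [|s1 IH1 s2 IH2] [|t1 t2] /=; try by constructor.
by apply: (iffP andP) => [[/IH1 -> /IH2 ->]|[<- <-]]; split; [apply/IH1|apply/IH2].
Qed.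

HB.instance Definition _ := hasDecEq.Build tree tree_eqP.

Fixpoint nint (t : tree) : nat :=
  match t with Leaf => 0 | Node a b => (nint a + nint b).+1 end.

(* The product s * t of two trees, as the multiset (list) of trees in the
   expansion (all coefficients are 1):
   | * t = t, s * | = s,
   (s1 \/ s2) * (t1 \/ t2) = s1 \/ (s2 * t) + (s * t1) \/ t2. *)
Fixpoint tprod (s : tree) : tree -> seq tree :=
  fix aux (t : tree) : seq tree :=
    match s with
    | Leaf => [:: t]
    | Node s1 s2 =>
      match t with
      | Leaf => [:: s]
      | Node t1 t2 =>
          [seq Node s1 u | u <- tprod s2 t] ++ [seq Node u t2 | u <- aux t1]
      end
    end.

Fixpoint trees_le (n : nat) : seq tree :=
  match n with
  | 0 => [:: Leaf]
  | n'.+1 => Leaf :: [seq Node p.1 p.2 |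
                        p <- [seq (a, b) | a <- trees_le n', b <- trees_le n']
                        & (nint p.1 + nint p.2 <= n')%N]
  end.

Fixpoint lcomb (n : nat) : tree :=
  match n with 0 => Leaf | n'.+1 => Node (lcomb n') Leaf end.

(* Descents: leaves that are not the leftmost leaf and are the left incoming
   edge of their vertex. [lm] records whether we are on the leftmost branch. *)
Fixpoint desc_aux (lm : bool) (t : tree) : nat :=
  match t with
  | Leaf => 0
  | Node a b => ((a == Leaf) && ~~ lm) + desc_aux lm a + desc_aux false b
  end.
Definition descents (t : tree) : nat := desc_aux true t.

Section Series.
Local Open Scope ring_scope.
Variable R : fieldType.

(* The completion: formal (possibly infinite) sums, given by their
   coefficient functions. *)
Definition series := tree -> R.

Definition sone : series := fun t => (t == Leaf)%:R.

(* bilinear extension of * to the completion; only pairs with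
   |u| + |v| = |t| contribute, and they all lie in trees_le |t|. *)
Definition smul (f g : series) : series := fun t =>
  \sum_(u <- trees_le (nint t)) \sum_(v <- trees_le (nint t))
     f u * g v * (count_mem t (tprod u v))%:R.

Definition spow (f : series) (k : nat) : series := iter k (smul f) sone.

(* log^*(| + L) = sum_{k>=1} (-1)^(k+1)/k L^{*k}, for L with no degree-0
   component; the coefficient of t in L^{*k} vanishes for k > |t|, so the
   coefficient of t of the (formal) infinite sum is the finite sum below. *)
Definition slog1p (L : series) : series := fun t =>
  \sum_(1 <= k < (nint t).+1) ((-1) ^+ k.+1 / k%:R) * spow L k t.

Definition Xcomb : series := fun t => (t == lcomb (nint t))%:R.

Definition logstar (F : series) : series := slog1p (fun t => F t - sone t).

End Series.

From mathcomp Require Import all_boot all_order all_algebra.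
From mathcomp Require Import zify ring.
Import GRing.Theory.

(* Write X = | + L, L the sum of all nonempty left combs. Left multiplication by
   the comb with j+1 vertices inserts, on the leftmost branch, a vertex whose
   left subtree is the comb with j vertices; so the coefficient of t in L^{*k}
   counts the ways of peeling k combs off t. On the descent word of t (one letter
   per vertex, the last one false, d of them true) this is the number of ways to
   cut the word into k blocks so that every true letter ends a block, namely
   C(n-1-d, k-1-d) for n = |t|. Finally
   sum_k (-1)^(k+1)/k C(n-1-d, k-1-d) = (-1)^d B(n-d, d+1) = (-1)^d d! (n-1-d)! / n!. *)

Lemma mem_trees_le n t : (t \in trees_le n) = (nint t <= n)%N.
Proof.
elim: n t => [|n IH] [|a b] //=; rewrite in_cons /=; apply/idP/idP.
- by case/mapP => -[x y]; rewrite mem_filter /= => /andP[le_xy _] [-> ->].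
- move=> le_ab; apply/mapP; exists (a, b) => //; rewrite mem_filter /=.
  rewrite -ltnS le_ab; apply/allpairsP; exists (a, b).
  by rewrite /= !IH; split=> //; lia.
Qed.

Lemma trees_le_uniq n : uniq (trees_le n).
Proof.
elim: n => [|n IH] //=; apply/andP; split; first by apply/mapP => -[[]].
rewrite map_inj_uniq; last by move=> [a b] [c d] /= [-> ->].
by rewrite filter_uniq // allpairs_uniq // => -[a b] [c d] _ _ /= [-> ->].
Qed.

Lemma lcombK : cancel lcomb nint.
Proof. by elim=> //= n ->; rewrite addn0. Qed.

(* One letter per internal vertex, in in-order: [true] iff its right subtree is
   not a leaf, i.e. iff the leftmost leaf of that subtree is a descent. *)
Fixpoint descent_word (t : tree) : seq bool :=
  if t is Node a b then descent_word a ++ (b != Leaf) :: descent_word b else [::].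

Lemma size_descent_word t : size (descent_word t) = nint t.
Proof. by elim: t => //= a IHa b IHb; rewrite size_cat /= IHa IHb addnS. Qed.

Lemma desc_aux_false t : desc_aux false t = (t != Leaf) + descents t.
Proof.
rewrite /descents; elim: t => //= a IHa b _; rewrite IHa andbT.
by case: (a == Leaf); rewrite /= ?addnA.
Qed.

Lemma descents_word t : descents t = count id (descent_word t).
Proof.
rewrite /descents; elim: t => //= a IHa b IHb.
by rewrite desc_aux_false count_cat /= -IHa -IHb andbF addnA.
Qed.

Lemma descent_word_lcomb n : descent_word (lcomb n) = nseq n false.
Proof. by elim: n => //= n ->; rewrite -[[:: false]]/(nseq 1 false) -nseqD addn1. Qed.

Lemma descent_free_lcomb t : all negb (descent_word t) -> t = lcomb (nint t).
Proof.
elim: t => //= a IHa b _; rewrite all_cat /= => /and3P[/IHa {1}-> + _].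
by case: b => //= _; rewrite addn0.
Qed.

Lemma descent_word_node a b : exists w, descent_word (Node a b) = rcons w false.
Proof.
elim: b a => [|c _ d IHd] a; first by exists (descent_word a); rewrite /= cats1.
have [w Hw] := IHd c; exists (descent_word a ++ true :: w).
by rewrite rcons_cat rcons_cons -Hw.
Qed.

(* [comb_ldiv j t = Some v] iff [t] occurs in [lcomb j.+1 * v], i.e. [t] arises
   from [v] by inserting on its leftmost branch a vertex with left subtree
   [lcomb j]. *)
Fixpoint comb_ldiv (j : nat) (t : tree) : option tree :=
  if t is Node a b then
    if a == lcomb j then Some b else omap (Node^~ b) (comb_ldiv j a)
  else None.

Lemma comb_ldiv_nint {j t v} : comb_ldiv j t = Some v -> nint t = (j + nint v).+1.
Proof.
elim: t v => //= a IHa b _ v; case: eqP => [-> [<-]|_]; first by rewrite lcombK.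
by case: comb_ldiv IHa => //= w /(_ w erefl) -> [<-] /=; lia.
Qed.

Lemma comb_ldiv_lcomb j : comb_ldiv j (lcomb j) = None.
Proof.
by case E: comb_ldiv => [v|] //; move/comb_ldiv_nint: E; rewrite lcombK; lia.
Qed.

Arguments tprod : simpl never.

Lemma tprod_lcomb j v : tprod (lcomb j.+1) v = Node (lcomb j) v ::
  (if v is Node v1 v2 then [seq Node u v2 | u <- tprod (lcomb j.+1) v1] else [::]).
Proof. by case: v. Qed.

Lemma eq_Node a b c d : (Node a b == Node c d) = (a == c) && (b == d).
Proof. by []. Qed.

Lemma count_map_Node a b c s :
  count_mem (Node a b) [seq Node u c | u <- s] = (c == b) * count_mem a s.
Proof.
elim: s => [|u s IH] /=; first by rewrite muln0.
by rewrite IH mulnDr eq_Node; case: (u == a); case: (c == b).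
Qed.

Lemma count_tprod_lcomb j v t :
  count_mem t (tprod (lcomb j.+1) v) = (comb_ldiv j t == Some v).
Proof.
elim: v t => [|v1 IHv1 v2 _] [|a b];
  rewrite tprod_lcomb /= ?count_map_Node ?eq_Node //.
- case: (a =P lcomb j) => [->|/eqP/negbTE ne]; first by rewrite eqxx addn0; case: b.
  by rewrite (eq_sym (lcomb j)) ne; case: comb_ldiv.
- by elim: (tprod _ _) => //= u s ->.
rewrite -[Node (lcomb j) Leaf]/(lcomb j.+1) IHv1.
case: (a =P lcomb j) => [->|/eqP/negbTE ne].
  by rewrite comb_ldiv_lcomb eqxx muln0 addn0 eq_sym.
rewrite (eq_sym (lcomb j)) ne; case: comb_ldiv => [w|] /=; last by rewrite muln0.
by rewrite !(inj_eq Some_inj) eq_Node (eq_sym b); case: (w == v1); case: (v2 == b).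
Qed.

Lemma comb_ldiv_word {j t v} : comb_ldiv j t = Some v ->
  exists c, descent_word t = nseq j false ++ c :: descent_word v.
Proof.
elim: t v => //= a IHa b _ v; case: (a =P lcomb j) => [-> [<-]|_].
  by exists (b != Leaf); rewrite descent_word_lcomb.
case: comb_ldiv IHa => //= w /(_ w erefl) [c Hc] [<-].
by exists c; rewrite /= Hc -catA.
Qed.

Lemma comb_ldiv_defined {j t} : (j < nint t)%N ->
  all negb (take j (descent_word t)) -> comb_ldiv j t != None.
Proof.
elim: t => //= a IHa b _ lt_j; case: (a =P lcomb j) => // ne.
rewrite take_cat size_descent_word; case: ltnP => [lt_ja|le_aj].
  by move/(IHa lt_ja); case: comb_ldiv.
rewrite all_cat => /andP[/descent_free_lcomb eq_a].
have lt_aj : (nint a < j)%N.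
  by rewrite ltn_neqAle le_aj andbT; apply/eqP => eq_aj; apply: ne; rewrite eq_a eq_aj.
case: b lt_j => [|c d] /= lt_j; first lia.
by rewrite (_ : j - nint a = (j - nint a).-1.+1) /=; last lia.
Qed.

(* Number of ways to cut [w] into [k] nonempty factors, each of the form
   [nseq i false ++ [:: c]]. *)
Fixpoint nsplit (k : nat) (w : seq bool) : nat :=
  if k is k'.+1 then
    \sum_(0 <= i < size w) all negb (take i w) * nsplit k' (drop i.+1 w)
  else w == [::].

Lemma nsplitS k w : nsplit k.+1 w =
  \sum_(0 <= i < size w) all negb (take i w) * nsplit k (drop i.+1 w).
Proof. by []. Qed.

Arguments nsplit : simpl never.

Lemma nsplitS_cons k x w : nsplit k.+1 (x :: w) = nsplit k w + ~~ x * nsplit k.+1 w.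
Proof.
rewrite !nsplitS big_nat_recl // take0 mul1n; congr addn; first by rewrite /= drop0.
rewrite big_distrr; apply: eq_bigr => i _ /=.
by case: x; rewrite ?mul1n.
Qed.

Lemma nsplit_rcons_small k w x : (k <= count id w)%N -> nsplit k (rcons w x) = 0.
Proof.
elim: w k => [|y w IH] [|k] //= le_k; rewrite nsplitS_cons.
have le_kw : (k <= count id w)%N by case: y le_k => /=; lia.
by rewrite IH //; case: y le_k => le_k; rewrite ?mul0n ?IH //; lia.
Qed.

Lemma nsplit_rcons_false w k :
  nsplit (count id w + k).+1 (rcons w false) = 'C(count negb w, k).
Proof.
elim: w k => [|[] w IH] k /=; rewrite nsplitS_cons ?IH ?add0n ?add1n.
- by case: k => [|k]; rewrite ?nsplitS ?big_geq.
- by rewrite mul0n addn0.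
case: k => [|k]; first by rewrite addn0 nsplit_rcons_small // !bin0.
by rewrite -addSnnS IH mul1n binS addnC.
Qed.

Section CombSeries.
Variable R : fieldType.
Local Open Scope ring_scope.

Definition comb_series : series R := fun t => Xcomb R t - sone R t.

Lemma comb_seriesE t :
  comb_series t = ((t == lcomb (nint t)) && (0 < nint t)%N)%:R.
Proof.
by case: t => [|a b]; rewrite /comb_series /Xcomb /sone /= ?subrr ?subr0 ?andbT.
Qed.

Lemma perm_comb_support n :
  perm_eq [seq u <- trees_le n | (u == lcomb (nint u)) && (0 < nint u)%N]
          [seq lcomb j.+1 | j <- iota 0 n].
Proof.
apply: uniq_perm; first by rewrite filter_uniq // trees_le_uniq.
  by rewrite map_inj_uniq ?iota_uniq // => i j /(can_inj lcombK) [].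
move=> u; rewrite mem_filter mem_trees_le.
apply/andP/mapP => [[/andP[/eqP eq_u pos_u] le_u]|[j]].
  by exists (nint u).-1; rewrite ?mem_iota ?prednK //; lia.
by rewrite mem_iota => lt_j ->; rewrite lcombK eqxx; split=> //; lia.
Qed.

Lemma smul_comb_series (g : series R) t :
  smul comb_series g t = \sum_(0 <= j < nint t) oapp g 0 (comb_ldiv j t).
Proof.
pose G u := \sum_(v <- trees_le (nint t)) g v * (count_mem t (tprod u v))%:R.
rewrite /smul (eq_bigr (fun u => comb_series u * G u)); last first.
  by move=> u _; rewrite /G mulr_sumr; apply: eq_bigr => v _; rewrite mulrA.
under eq_bigr do rewrite comb_seriesE mulr_natl mulrb.
rewrite -big_mkcond -big_filter (perm_big _ (perm_comb_support _)) big_map.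
rewrite /index_iota subn0 big_seq [RHS]big_seq; apply: eq_bigr => j.
rewrite mem_iota /G => /andP[_ lt_j]; under eq_bigr do rewrite count_tprod_lcomb.
case E: (comb_ldiv j t) => [v|] /=; last by rewrite big1 // => v _; rewrite mulr0.
rewrite (bigD1_seq v) ?trees_le_uniq //= ?eqxx ?mulr1; last first.
  by rewrite mem_trees_le (comb_ldiv_nint E); lia.
rewrite big1 ?addr0 // => w; rewrite (inj_eq Some_inj) eq_sym => /negbTE ->.
by rewrite mulr0.
Qed.

Lemma spow_comb_series k t : spow comb_series k t = (nsplit k (descent_word t))%:R.
Proof.
elim: k t => [|k IH] t.
  by case: t => [|a b] //=; rewrite /spow /sone /= /nsplit; case: descent_word.
rewrite [LHS]smul_comb_series nsplitS natr_sum size_descent_word.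
rewrite big_seq [RHS]big_seq; apply: eq_bigr => j.
rewrite mem_index_iota => /andP[_ lt_j].
case E: (comb_ldiv j t) => [v|] /=.
  have [c ->] := comb_ldiv_word E.
  rewrite take_size_cat ?size_nseq // all_nseq orbT mul1n -cat_rcons drop_size_cat //.
  by rewrite size_rcons size_nseq.
case allF: (all negb (take j (descent_word t))); last by rewrite mul0n.
by move: (comb_ldiv_defined lt_j allF); rewrite E.
Qed.

End CombSeries.

Section BetaSum.
Local Open Scope ring_scope.
Variable R : fieldType.
Hypothesis charR0 : [pchar R] =i pred0.

Lemma natf_eq0 n : (n%:R == 0 :> R) = (n == 0)%N.
Proof. exact: (pcharf0P R).1 charR0 n. Qed.

Lemma fact_natf_neq0 n : n`!%:R != 0 :> R.
Proof. by rewrite natf_eq0 -lt0n fact_gt0. Qed.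

Definition beta_sum a d : R :=
  \sum_(0 <= i < a.+1) (-1) ^+ i * 'C(a, i)%:R / (i + d).+1%:R.

Lemma beta_sumS a d : beta_sum a.+1 d = beta_sum a d - beta_sum a d.+1.
Proof.
rewrite {1}/beta_sum big_nat_recl //.
under eq_bigr do rewrite binS natrD mulrDr mulrDl.
rewrite big_split /= addrA; congr (_ + _).
  rewrite /beta_sum [RHS]big_nat_recl // big_nat_recr //= (bin_small (ltnSn a)).
  by rewrite mulr0 mul0r addr0 !bin0 addrC.
rewrite /beta_sum -sumrN; apply: eq_bigr => i _.
by rewrite exprS mulN1r !mulNr addSnnS.
Qed.

(* The Beta integral B(a+1, d+1) = \int_0^1 x^d (1-x)^a dx, expanded binomially. *)
Lemma beta_sumE a d : beta_sum a d = (a`! * d`!)%:R / (a + d).+1`!%:R.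
Proof.
have natf_neq0 n : n.+1%:R != 0 :> R by rewrite natf_eq0.
elim: a d => [|a IH] d.
  rewrite /beta_sum big_nat1 bin0 !mul1r add0n fact0 mul1n factS natrM.
  by rewrite invfM mulrCA mulfV ?fact_natf_neq0 ?mulr1.
rewrite beta_sumS !IH !addSn !addnS !factS !natrM.
by field; rewrite fact_natf_neq0 -!natrD nat1r add2n !natf_neq0.
Qed.

Lemma sum_nsplit_rcons_beta w :
  \sum_(1 <= j < (size w).+2) (-1) ^+ j.+1 / j%:R * (nsplit j (rcons w false))%:R
  = (-1) ^+ count id w * beta_sum (count negb w) (count id w).
Proof.
have -> : size w = (count negb w + count id w)%N by rewrite -(count_predC id) addnC.
set d := count id w; set a := count negb w.
rewrite big_add1 /= (@big_cat_nat _ _ _ d) //=; last lia.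
rewrite big_nat_cond big1 ?add0r => [|i /andP[/andP[_ lt_id] _]]; last first.
  by rewrite nsplit_rcons_small ?mulr0.
rewrite -{1}(add0n d) big_addn (_ : (a + d).+1 - d = a.+1)%N; last lia.
rewrite /beta_sum mulr_sumr; apply: eq_bigr => i _.
by rewrite (addnC i) nsplit_rcons_false !exprS exprD; ring.
Qed.

Lemma sum_nsplit_rcons w :
  \sum_(1 <= j < (size w).+2) (-1) ^+ j.+1 / j%:R * (nsplit j (rcons w false))%:R
  = (size w).+1%:R^-1 * ((-1) ^+ count id w / 'C(size w, count id w)%:R) :> R.
Proof.
rewrite sum_nsplit_rcons_beta beta_sumE.
have -> : size w = (count negb w + count id w)%N by rewrite -(count_predC id) addnC.
set d := count id w; set a := count negb w.
have C_neq0 : 'C(a + d, d)%:R != 0 :> R by rewrite natf_eq0 -lt0n bin_gt0 leq_addl.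
rewrite factS -(bin_fact (leq_addl a d)) addnK !natrM.
by field; rewrite C_neq0 !fact_natf_neq0 -natrD nat1r natf_eq0.
Qed.

End BetaSum.

Local Open Scope ring_scope.

Theorem corollary4p4 (k : fieldType) (chark : [pchar k] =i pred0) (t : tree) :
  logstar (Xcomb k) t =
  if nint t == 0%N then 0
  else (nint t)%:R^-1 * ((-1) ^+ descents t / ('C((nint t).-1, descents t))%:R).
Proof.
have -> : logstar (Xcomb k) t = slog1p (comb_series k) t by [].
rewrite /slog1p; under eq_bigr do rewrite spow_comb_series.
case: t => [|a b]; first by rewrite big_geq.
have [w w_def] := descent_word_node a b.
have nint_ab : nint (Node a b) = (size w).+1.
  by rewrite -size_descent_word w_def size_rcons.
have count_w : count id (rcons w false) = count id w.
  by rewrite -cats1 count_cat addn0.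
rewrite descents_word w_def nint_ab count_w /=.
exact: sum_nsplit_rcons.
Qed.
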